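(* Every graph admits a Helly EPG representation.
   Context: A grid is the set of integer points of the plane; a grid edge joins two grid points at distance $1$. A path in the grid is a sequence of distinct grid edges in which consecutive edges share exactly one grid point and non-consecutive edges share none. An EPG representation of a graph $G$ is a family $(P_v)_{v\in V(G)}$ of grid paths such that distinct $u,v$ are adjacent iff $P_u,P_v$ share a grid edge. It is Helly if every subfamily of pairwise edge-intersecting paths has a grid edge common to all its members. *)

From mathcomp Require Import all_boot all_order all_algebra.
Set Implicit Arguments. Unset Strict Implicit. Unset Printing Implicit Defensive.
Import GRing.Theory Num.Theory.
Local Open Scope ring_scope.

Definition gpoint := (int * int)%type.

(* A grid edge (an unordered pair of grid points at distance 1) is encoded
   canonically by its lower-left endpoint p and a direction flag:
   (p, false) is the horizontal edge {p, p + (1,0)},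
   (p, true)  is the vertical edge   {p, p + (0,1)}. *)
Definition gedge := (gpoint * bool)%type.

Definition gends (e : gedge) : seq gpoint :=
  let: (p, vert) := e in
  [:: p; if vert then (p.1, p.2 + 1) else (p.1 + 1, p.2)].

Definition nshared (e f : gedge) : nat :=
  count (fun x => x \in gends f) (gends e).

Definition grid_path (s : seq gedge) : Prop :=
  s != [::] /\ uniq s /\
  forall i j : nat, (i < j < size s)%N ->
    nshared (nth (0, 0, false) s i) (nth (0, 0, false) s j)
      = (if j == i.+1 then 1%N else 0%N).

Definition EPG_representation (V : finType) (adj : rel V)
    (P : V -> seq gedge) : Prop :=
  (forall v, grid_path (P v)) /\
  (forall u v, u != v -> (adj u v <-> exists g, g \in P u /\ g \in P v)).

Definition Helly (V : finType) (P : V -> seq gedge) : Prop :=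
  forall S : {set V},
    (forall u v, u \in S -> v \in S -> exists g, g \in P u /\ g \in P v) ->
    exists g, forall v, v \in S -> g \in P v.

From mathcomp Require Import all_boot all_order all_algebra zify.
Import Order.TTheory GRing.Theory Num.Theory.
Local Open Scope ring_scope.

(* Enumerate all vertex sets S_0, S_1, ... The path of the vertex of rank i
   runs from left to right along row i, except that for every clique S_c
   containing the vertex it detours through the column pair 2c, 2c+1 down to
   row -1, crossing the edge of row -1 between columns 2c and 2c+1.  An edge of
   this path lies either on row i or on the detour of a clique containing the
   vertex, so two paths share an edge iff their vertices lie in a common
   clique, i.e. are adjacent; and pairwise edge-intersecting paths come from a
   clique S_c, all of whose paths contain the detour edge of column 2c.
   Detours go down in even columns and up in odd ones, so the points of a path
   increase strictly in the lexicographic order on (x, (-1)^(x+1) y): paths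
   are simple. *)

Definition grid_adj (p q : gpoint) : bool :=
  [|| q == (p.1 + 1, p.2), q == (p.1, p.2 + 1),
      p == (q.1 + 1, q.2) | p == (q.1, q.2 + 1)].

Definition edge_of (p q : gpoint) : gedge :=
  if q == (p.1 + 1, p.2) then (p, false)
  else if q == (p.1, p.2 + 1) then (p, true)
  else if p == (q.1 + 1, q.2) then (q, false)
  else (q, true).

Lemma gends_edge_of p q : grid_adj p q -> perm_eq (gends (edge_of p q)) [:: p; q].
Proof.
rewrite /grid_adj /edge_of.
case: eqP => [-> _ | _]; first by [].
case: eqP => [-> _ | _]; first by [].
by case: eqP => [-> _ | _ /= /eqP ->]; rewrite /= -cat1s perm_catC.
Qed.

Lemma nshared_edge_of p q r s : grid_adj p q -> grid_adj r s ->
  nshared (edge_of p q) (edge_of r s) = ((p \in [:: r; s]) + (q \in [:: r; s]))%N.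
Proof.
move=> /gends_edge_of Epq /gends_edge_of Ers.
by rewrite /nshared (permP Epq) /= addn0 !(perm_mem Ers).
Qed.

Section GridWalk.
Variables (x : gpoint) (s : seq gpoint).
Hypotheses (uniq_walk : uniq (x :: s)) (walk : path grid_adj x s).

Let e0 : gedge := (0, 0, false).

Lemma nshared_walk i j : (i < size s)%N -> (j < size s)%N ->
  nshared (nth e0 (pairmap edge_of x s) i) (nth e0 (pairmap edge_of x s) j) =
  (((i == j) || (i == j.+1)) + ((i.+1 == j) || (i == j)))%N.
Proof.
move=> ilt jlt; have /(pathP x) step := walk.
rewrite !(nth_pairmap x) // nshared_edge_of ?step // !inE.
change (nth x s i) with (nth x (x :: s) i.+1).
change (nth x s j) with (nth x (x :: s) j.+1).
by rewrite !(nth_uniq x _ _ uniq_walk) //= ltnW.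
Qed.

Lemma grid_path_walk : s != [::] -> grid_path (pairmap edge_of x s).
Proof.
move=> s_nil; rewrite /grid_path; split; first by rewrite -size_eq0 size_pairmap size_eq0.
rewrite size_pairmap; split=> [|i j /andP [ij jlt]].
- apply/(uniqP e0) => i j; rewrite !inE size_pairmap => ilt jlt eq_ij.
  by have := nshared_walk i j ilt jlt; rewrite eq_ij nshared_walk // eqxx; lia.
- rewrite nshared_walk //; last exact: ltn_trans jlt.
  by case: (eqVneq j i.+1) => [-> | ne] /=; lia.
Qed.

End GridWalk.

Definition snake (p : gpoint) : int *l int :=
  (p.1, if odd (absz p.1) then p.2 else - p.2).

Definition snake_lt : rel gpoint := fun p q => (snake p < snake q)%O.

Lemma snake_walk_uniq x s : path snake_lt x s -> uniq (x :: s).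
Proof.
apply: (@sorted_uniq _ snake_lt _ _ (x :: s)) => [q p r | p]; [exact: lt_trans | exact: ltxx].
Qed.

Fixpoint column (X y d : int) (n : nat) : seq gpoint :=
  if n is n'.+1 then (X, y + d) :: column X (y + d) d n' else [::].

Lemma column_path {e : rel gpoint} {X d : int} :
  (forall y, e (X, y) (X, y + d)) -> forall y n,
  path e (X, y) (column X y d n) /\ last (X, y) (column X y d n) = (X, y + d *+ n).
Proof.
move=> step y n; elim: n y => [|n IH] y /=; first by rewrite addr0.
by have [walk ->] := IH (y + d); rewrite step walk mulrS addrA.
Qed.

Section Lane.
Variables (row : nat) (dips : pred nat).

Definition lane_edge (g : gedge) : bool :=
  (~~ g.2 && (g.1.2 == Posz row)) || (dips (absz g.1.1)./2 && (g.2 || (g.1.2 == -1))).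

Definition lane_step (p q : gpoint) : bool :=
  [&& grid_adj p q, snake_lt p q & lane_edge (edge_of p q)].

Lemma lane_step_right (m : nat) (y : int) : (y == Posz row) || (dips m./2 && (y == -1)) ->
  lane_step (Posz m, y) (Posz m.+1, y).
Proof.
move=> on_lane; rewrite -addn1 PoszD /lane_step /grid_adj /edge_of /snake_lt !eqxx /=.
by rewrite /lane_edge /= on_lane ltEprodlexi /= andbT; lia.
Qed.

Lemma lane_step_down c y : dips c -> lane_step (Posz c.*2, y) (Posz c.*2, y - 1).
Proof.
move=> dip_c; rewrite /lane_step /grid_adj /edge_of /snake_lt !xpair_eqE /=.
have -> : (Posz c.*2 == Posz c.*2 + 1) = false by lia.
have -> : (y - 1 == y + 1) = false by lia.
rewrite subrK !eqxx /= /lane_edge /= doubleK dip_c ltEprodlexi /= odd_double; lia.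
Qed.

Lemma lane_step_up c y : dips c -> lane_step (Posz c.*2.+1, y) (Posz c.*2.+1, y + 1).
Proof.
move=> dip_c; rewrite /lane_step /grid_adj /edge_of /snake_lt !xpair_eqE /=.
have -> : (Posz c.*2.+1 == Posz c.*2.+1 + 1) = false by lia.
rewrite !eqxx /= /lane_edge /= uphalf_double dip_c ltEprodlexi /= odd_double /=; lia.
Qed.

Lemma descent_path c : dips c ->
  path lane_step (Posz c.*2, Posz row) (column c.*2 row (-1) row.+1) /\
  last (Posz c.*2, Posz row) (column c.*2 row (-1) row.+1) = (Posz c.*2, -1).
Proof.
move=> dip_c; have [walk ->] := column_path (lane_step_down c ^~ dip_c) row row.+1.
by split=> //; congr (_, _); lia.
Qed.

Lemma ascent_path c : dips c ->
  path lane_step (Posz c.*2.+1, -1) (column c.*2.+1 (-1) 1 row.+1) /\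
  last (Posz c.*2.+1, -1) (column c.*2.+1 (-1) 1 row.+1) = (Posz c.*2.+1, Posz row).
Proof.
move=> dip_c; have [walk ->] := column_path (lane_step_up c ^~ dip_c) (-1) row.+1.
by split=> //; congr (_, _); lia.
Qed.

Definition block (c : nat) : seq gpoint :=
  if dips c then
    column c.*2 row (-1) row.+1 ++
      (Posz c.*2.+1, -1) :: column c.*2.+1 (-1) 1 row.+1 ++ [:: (Posz (c.+1).*2, Posz row)]
  else [:: (Posz c.*2.+1, Posz row); (Posz (c.+1).*2, Posz row)].

Lemma block_path c :
  path lane_step (Posz c.*2, Posz row) (block c) /\
  last (Posz c.*2, Posz row) (block c) = (Posz (c.+1).*2, Posz row).
Proof.
have right_on_row : lane_step (Posz c.*2.+1, Posz row) (Posz (c.+1).*2, Posz row).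
  by apply: lane_step_right; rewrite eqxx.
rewrite /block; case: ifP => dip_c; last first.
  rewrite /= right_on_row !andbT; split=> //.
  by apply: lane_step_right; rewrite eqxx.
have [down_path down_last] := descent_path c dip_c.
have [up_path up_last] := ascent_path c dip_c.
set D := column c.*2 _ _ _ in down_path down_last *.
set U := column c.*2.+1 _ _ _ in up_path up_last *.
clearbody D U; split; last by rewrite last_cat last_cons last_cat.
rewrite cat_path down_path down_last /= cat_path up_path up_last /= right_on_row !andbT.
by apply: lane_step_right; rewrite doubleK dip_c eqxx orbT.
Qed.

Lemma block_dip_edge c z : dips c -> (Posz c.*2, -1, false) \in pairmap edge_of z (block c).
Proof.
move=> dip_c; rewrite /block dip_c pairmap_cat mem_cat; apply/orP; right.
have [_ down_last] := descent_path c dip_c.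
(* the column is nonempty, so its [last] does not depend on the default point *)
have -> : last z (column c.*2 row (-1) row.+1) = (Posz c.*2, -1) by rewrite -down_last.
by rewrite /= /edge_of -addn1 PoszD eqxx inE eqxx.
Qed.

Fixpoint lane_from (k n : nat) : seq gpoint :=
  if n is n'.+1 then block k ++ lane_from k.+1 n' else [::].

Lemma lane_from_path k n : path lane_step (Posz k.*2, Posz row) (lane_from k n).
Proof.
elim: n k => [|n IH] k //=; have [block_walk block_last] := block_path k.
by rewrite cat_path block_walk block_last IH.
Qed.

Lemma lane_from_dip_edge k n c z : (k <= c < k + n)%N -> dips c ->
  (Posz c.*2, -1, false) \in pairmap edge_of z (lane_from k n).
Proof.
elim: n k z => [|n IH] k z; first by rewrite addn0; lia.
move=> c_range dip_c; rewrite /= pairmap_cat mem_cat.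
have [k_c | k_c] := eqVneq k c; first by subst k; apply/orP; left; exact: block_dip_edge.
by apply/orP; right; apply: IH => //; lia.
Qed.

Definition lane_edges (n : nat) : seq gedge := pairmap edge_of (0, Posz row) (lane_from 0 n).

Lemma lane_edges_grid_path n : (0 < n)%N -> grid_path (lane_edges n).
Proof.
case: n => // n _; have walk := lane_from_path 0 n.+1.
apply: grid_path_walk.
- by apply: snake_walk_uniq; apply: sub_path walk => p q /and3P [].
- by apply: sub_path walk => p q /and3P [].
- by rewrite /= /block; case: (dips 0).
Qed.

Lemma lane_edgesP n g : g \in lane_edges n -> lane_edge g.
Proof.
move: g; apply/allP; move: (lane_from_path 0 n); rewrite /lane_edges.
by elim: (lane_from 0 n) (0, Posz row) => //= q s IH p /andP [/and3P [_ _ ->] /IH].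
Qed.

Lemma lane_edges_dip c n : (c < n)%N -> dips c -> (Posz c.*2, -1, false) \in lane_edges n.
Proof. by move=> c_n; apply: lane_from_dip_edge; rewrite add0n. Qed.

End Lane.

Section Representation.
Context {V : finType} (adj : rel V).

Definition clique (S : {set V}) : bool :=
  [forall u in S, forall v in S, (u != v) ==> adj u v].

Lemma cliqueP (S : {set V}) : reflect {in S &, forall u v, u != v -> adj u v} (clique S).
Proof.
apply: (iffP forall_inP) => [cl u v uS vS | cl u uS].
  by move/forall_inP/(_ v vS)/implyP: (cl u uS).
by apply/forall_inP => v vS; apply/implyP; exact: cl.
Qed.

Definition dips_of (v : V) : pred nat :=
  fun c => let S := nth set0 (enum {set V}) c in (v \in S) && clique S.

Definition rep (v : V) : seq gedge := lane_edges (enum_rank v) (dips_of v) #|{set V}|.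

Lemma rep_grid_path v : grid_path (rep v).
Proof. by apply: lane_edges_grid_path; apply/card_gt0P; exists set0. Qed.

Definition clique_edge (S : {set V}) : gedge := (Posz (index S (enum {set V})).*2, -1, false).

Lemma clique_rep_edge S v : clique S -> v \in S -> clique_edge S \in rep v.
Proof.
move=> cl vS; apply: lane_edges_dip; first by rewrite cardE index_mem mem_enum.
by rewrite /dips_of nth_index ?mem_enum // vS cl.
Qed.

Lemma rep_shared_adj u v g : u != v -> g \in rep u -> g \in rep v -> adj u v.
Proof.
move=> uv /lane_edgesP /orP [] /andP [gu1 gu2] /lane_edgesP /orP [] /andP [gv1 gv2].
- move: uv; rewrite -(inj_eq enum_rank_inj) -(inj_eq val_inj) /=.
  by rewrite -eqz_nat -(eqP gu2) (eqP gv2) eqxx.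
- by move: gv2; rewrite (negbTE gu1) /= (eqP gu2).
- by move: gu2; rewrite (negbTE gv1) /= (eqP gv2).
- case/andP: gu1 => uS /cliqueP cl; case/andP: gv1 => vS _.
  exact: cl.
Qed.

Lemma rep_pairwise_clique (S : {set V}) :
  {in S &, forall u v, exists g, g \in rep u /\ g \in rep v} -> clique S.
Proof.
move=> shared; apply/cliqueP => u v uS vS uv.
by have [g [gu gv]] := shared u v uS vS; exact: rep_shared_adj gu gv.
Qed.

Lemma clique2 u v : symmetric adj -> adj u v -> clique [set u; v].
Proof.
move=> adjC adj_uv; apply/cliqueP => x y; rewrite !inE.
by do 2!case/orP=> /eqP->; rewrite ?eqxx // adjC.
Qed.

End Representation.

Theorem lemma2p2 (V : finType) (adj : rel V) :
  symmetric adj -> irreflexive adj ->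
  exists P : V -> seq gedge, EPG_representation adj P /\ Helly P.
Proof.
move=> adjC _; exists (rep adj); split; first split.
- exact: rep_grid_path.
- move=> u v uv; split=> [adj_uv | [g [gu gv]]]; last exact: rep_shared_adj gu gv.
  have cl : clique adj [set u; v] by exact: clique2.
  by exists (clique_edge [set u; v]); split; apply: clique_rep_edge; rewrite // !inE eqxx ?orbT.
- move=> S /rep_pairwise_clique cl.
  by exists (clique_edge S) => v; exact: clique_rep_edge.
Qed.
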